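(* Let $G=(V,E)$ be a connected graph, let $(C,+)$ be an Abelian group, let $c\colon V\to C$ be a distinguishing vertex colouring, and let $c'$ be the canonical edge colouring $c'(uv)=c(u)+c(v)$. Let $\Gamma=\{\gamma\in\operatorname{Aut} G : c'\circ\gamma=c'\}$ be the stabiliser of $c'$. Then $|\Gamma|\le |C|$.
   Context: Graphs are simple and may be infinite. Automorphisms act on edges by $\gamma(uv)=\gamma(u)\gamma(v)$. A vertex colouring $c$ is distinguishing if the identity is the only automorphism $\gamma$ with $c\circ\gamma=c$. *)

From HB Require Import structures.
From mathcomp Require Import all_boot all_order all_algebra.
From Stdlib Require Import Relations.
Set Implicit Arguments. Unset Strict Implicit. Unset Printing Implicit Defensive.
Import GRing.Theory.
Local Open Scope ring_scope.

Definition simple_graph (V : Type) (adj : V -> V -> Prop) : Prop :=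
  (forall u v, adj u v -> adj v u) /\ (forall v, ~ adj v v).

Definition connected (V : Type) (adj : V -> V -> Prop) : Prop :=
  forall u v, clos_refl_trans V adj u v.

Definition is_aut (V : Type) (adj : V -> V -> Prop) (g : V -> V) : Prop :=
  bijective g /\ (forall u v, adj u v <-> adj (g u) (g v)).

Definition distinguishing (V T : Type) (adj : V -> V -> Prop) (c : V -> T) : Prop :=
  forall g, is_aut adj g -> (forall v, c (g v) = c v) -> forall v, g v = v.

(* Canonical edge colouring c'(uv) = c(u) + c(v) (symmetric, so well defined on edges). *)
Definition canon_edge_col (V : Type) (C : zmodType) (c : V -> C) (u v : V) : C :=
  c u + c v.

(* gamma lies in the stabiliser of c': an automorphism with c' o gamma = c' on every edge,
   where gamma(uv) = gamma(u)gamma(v). *)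
Definition in_edge_stab (V : Type) (C : zmodType) (adj : V -> V -> Prop) (c : V -> C)
    (g : V -> V) : Prop :=
  is_aut adj g /\
  (forall u v, adj u v -> canon_edge_col c (g u) (g v) = canon_edge_col c u v).

From HB Require Import structures.
From mathcomp Require Import all_boot all_order all_algebra.
From Stdlib Require Import Relations Classical.
Set Implicit Arguments. Unset Strict Implicit. Unset Printing Implicit Defensive.
Import GRing.Theory.
Local Open Scope ring_scope.

(* For g1, g2 in the stabiliser of c', the difference d := c o g1 - c o g2
   changes sign along every edge, since both maps preserve c(u) + c(v).  By
   connectivity d vanishes everywhere as soon as it vanishes at one vertex v0;
   then g1 o g2^-1 is an automorphism preserving c, hence the identity since
   c is distinguishing.  So g |-> c (g v0) is injective on the stabiliser. *)

Section Automorphisms.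

Variables (V : Type) (adj : V -> V -> Prop).

Lemma is_aut_comp (g h : V -> V) :
  is_aut adj g -> is_aut adj h -> is_aut adj (g \o h).
Proof.
move=> [g_bij g_adj] [h_bij h_adj]; split; first exact: bij_comp.
by move=> u v; rewrite h_adj g_adj.
Qed.

Lemma is_aut_inv (g h : V -> V) :
  is_aut adj g -> cancel g h -> cancel h g -> is_aut adj h.
Proof.
move=> [_ g_adj] gK hK; split; first by exists g.
by move=> u v; rewrite -{1}(hK u) -{1}(hK v) -g_adj.
Qed.

Lemma distinguishing_eq (T : Type) (c : V -> T) (g1 g2 : V -> V) :
  distinguishing adj c -> is_aut adj g1 -> is_aut adj g2 ->
  (forall v, c (g1 v) = c (g2 v)) -> forall v, g1 v = g2 v.
Proof.
move=> c_dist g1_aut g2_aut eq_c v.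
have [h g2K hK] := proj1 g2_aut.
have gh_aut : is_aut adj (g1 \o h).
  exact: is_aut_comp g1_aut (is_aut_inv g2_aut g2K hK).
have gh_id := c_dist _ gh_aut (fun x => etrans (eq_c (h x)) (congr1 c (hK x))).
by rewrite -{1}(g2K v) -[g1 _]/((g1 \o h) (g2 v)) gh_id.
Qed.

End Automorphisms.

Section EdgeStabiliser.

Variables (V : Type) (adj : V -> V -> Prop) (C : zmodType) (c : V -> C).

Lemma alternating_eq0_connect (d : V -> C) (x y : V) :
  (forall u v, adj u v -> d v = - d u) ->
  clos_refl_trans V adj x y -> d x = 0 -> d y = 0.
Proof.
move=> d_alt; elim=> [u v uv|//|u v w _ IHuv _ IHvw].
  by rewrite (d_alt u v uv) => ->; rewrite oppr0.
by move/IHuv/IHvw.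
Qed.

Lemma in_edge_stab_diff_alt (g1 g2 : V -> V) (u v : V) :
  in_edge_stab adj c g1 -> in_edge_stab adj c g2 -> adj u v ->
  c (g1 v) - c (g2 v) = - (c (g1 u) - c (g2 u)).
Proof.
move=> [_ g1_col] [_ g2_col] uv.
have := etrans (g1_col u v uv) (esym (g2_col u v uv)).
rewrite /canon_edge_col => /eqP; rewrite -subr_eq0 => /eqP col_eq.
by apply/eqP; rewrite -subr_eq0 opprK addrC addrACA -opprD col_eq.
Qed.

Lemma in_edge_stab_eq_col (g1 g2 : V -> V) (v0 : V) :
  connected adj -> in_edge_stab adj c g1 -> in_edge_stab adj c g2 ->
  c (g1 v0) = c (g2 v0) -> forall v, c (g1 v) = c (g2 v).
Proof.
move=> conn g1_stab g2_stab eq_v0 v; apply/eqP; rewrite -subr_eq0; apply/eqP.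
apply: (alternating_eq0_connect (d := fun x => c (g1 x) - c (g2 x)) _ (conn v0 v)).
  by move=> x y; exact: in_edge_stab_diff_alt.
by rewrite /= eq_v0 subrr.
Qed.

End EdgeStabiliser.

Theorem mainTheorem5 (V : Type) (adj : V -> V -> Prop) (C : zmodType) (c : V -> C) :
  simple_graph adj -> connected adj -> distinguishing adj c ->
  exists f : (V -> V) -> C,
    forall g1 g2, in_edge_stab adj c g1 -> in_edge_stab adj c g2 ->
      f g1 = f g2 -> forall v, g1 v = g2 v.
Proof.
move=> _ conn c_dist.
have [[v0]|V_empty] := classic (inhabited V); last first.
  by exists (fun _ => 0) => g1 g2 _ _ _ v; case: V_empty.
exists (fun g => c (g v0)) => g1 g2 g1_stab g2_stab eq_v0.
apply: distinguishing_eq c_dist (proj1 g1_stab) (proj1 g2_stab) _.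
exact: in_edge_stab_eq_col conn g1_stab g2_stab eq_v0.
Qed.
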